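(* Every Connes amenable dual Banach algebra is weakly Connes amenable.
   Context: A dual Banach algebra is a Banach algebra $\mathfrak{A}$ which is the dual of a Banach space $\mathfrak{A}_*$ and whose multiplication is separately $w^*$-continuous. A derivation $D:\mathfrak{A}\to F$ into a Banach $\mathfrak{A}$-bimodule $F$ is a continuous linear map with $D(ab)=D(a)\cdot b+a\cdot D(b)$; it is inner if $D(a)=a\cdot x-x\cdot a$ for some $x\in F$. A Banach $\mathfrak{A}$-bimodule $E$ is dual if $E=(E_* )^*$ for a closed submodule $E_*$ of $E^*$; it is normal if in addition the module actions $a\mapsto a\cdot x$, $a\mapsto x\cdot a$ are $w^*$-$w^*$ continuous. $\mathfrak{A}$ is Connes amenable if for every normal dual Banach $\mathfrak{A}$-bimodule $E$, every $w^*$-$w^*$ continuous derivation $\mathfrak{A}\to E$ is inner. For a Banach $\mathfrak{A}$-bimodule $E$, $\sigma wc(E)$ is the set of $x\in E$ such that $a\mapsto a\cdot x$ and $a\mapsto x\cdot a$ are continuous from $(\mathfrak{A},w^* )$ to $(E,\sigma(E,E^* ))$; it is a closed submodule, and $\sigma wc(E)^*$ is a normal dual bimodule. Let $j_{\mathfrak{A}}:\mathfrak{A}^*\to\sigma wc(\mathfrak{A})^*$ be the adjoint of the inclusion $\sigma wc(\mathfrak{A})\hookrightarrow\mathfrak{A}$ (restriction of functionals), where $\mathfrak{A}$ is a bimodule over itself. $\mathfrak{A}$ is weakly Connes amenable if for every derivation $D:\mathfrak{A}\to\mathfrak{A}^*$ such that $j_{\mathfrak{A}}\circ D:\mathfrak{A}\to\sigma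 wc(\mathfrak{A})^*$ is $w^*$-$w^*$ continuous, the derivation $j_{\mathfrak{A}}\circ D$ is inner. *)

From mathcomp Require Import all_boot all_algebra.
From mathcomp Require Import all_classical all_reals all_analysis.
From mathcomp Require Export complex.
Import numFieldNormedType.Exports.

Set Implicit Arguments.
Unset Strict Implicit.
Unset Printing Implicit Defensive.

Import GRing.Theory Num.Theory.
Local Open Scope ring_scope.
Local Open Scope classical_set_scope.

Section DualBanach.
Variable K : numFieldType.

Definition is_lin_functional (V : normedModType K) (f : V -> K) : Prop :=
  forall (k : K) (u v : V), f (k *: u + v) = k * f u + f v.

Definition is_cont_functional (V : normedModType K) (f : V -> K) : Prop :=
  is_lin_functional f /\ continuous (f : V -> K^o).

Definition cdual (V : normedModType K) := {f : V -> K | is_cont_functional f}.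

Definition weak_nbhs (X Y : Type) (p : X -> Y -> K) (x0 : X) (U : set X) : Prop :=
  exists (n : nat) (ys : 'I_n -> Y) (e : K), 0 < e /\
    [set x | forall i, `|p x (ys i) - p x0 (ys i)| < e] `<=` U.

Definition weak_continuous (X Y Z W : Type) (p : X -> Y -> K) (q : Z -> W -> K)
  (g : X -> Z) : Prop :=
  forall (x0 : X) (V : set Z), weak_nbhs q (g x0) V -> weak_nbhs p x0 (g @^-1` V).

Record banach_algebra (A : completeNormedModType K) (mul : A -> A -> A) : Prop := {
  ba_assoc : forall a b c, mul a (mul b c) = mul (mul a b) c;
  ba_linl : forall (k : K) a b c, mul (k *: a + b) c = k *: mul a c + mul b c;
  ba_linr : forall (k : K) a b c, mul a (k *: b + c) = k *: mul a b + mul a c;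
  ba_submul : forall a b, `|mul a b| <= `|a| * `|b| }.

(* A is the dual of the Banach space P via the pairing pA: a |-> pA a is an
   isometric linear bijection from A onto P^*. *)
Record dual_pairing (A P : completeNormedModType K) (pA : A -> P -> K) : Prop := {
  dp_linl : forall (k : K) a b x, pA (k *: a + b) x = k * pA a x + pA b x;
  dp_cont : forall a, is_cont_functional (pA a);
  dp_isom_le : forall a x, `|pA a x| <= `|a| * `|x|;
  dp_isom_ge : forall a (e : K), 0 < e ->
                 exists x, `|x| <= 1 /\ `|a| - e < `|pA a x|;
  dp_onto : forall f : P -> K, is_cont_functional f ->
                 exists a, forall x, pA a x = f x }.

Definition dual_banach_algebra (A P : completeNormedModType K)
  (mul : A -> A -> A) (pA : A -> P -> K) : Prop :=
  [/\ banach_algebra mul, dual_pairing pA,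
      (forall b, weak_continuous pA pA (fun a => mul a b)) &
      (forall b, weak_continuous pA pA (fun a => mul b a))].

Record banach_bimodule (A F : completeNormedModType K) (mul : A -> A -> A)
  (lact : A -> F -> F) (ract : F -> A -> F) : Prop := {
  bm_lact_linl : forall (k : K) a b x, lact (k *: a + b) x = k *: lact a x + lact b x;
  bm_lact_linr : forall (k : K) a x y, lact a (k *: x + y) = k *: lact a x + lact a y;
  bm_ract_linl : forall (k : K) x y a, ract (k *: x + y) a = k *: ract x a + ract y a;
  bm_ract_linr : forall (k : K) x a b, ract x (k *: a + b) = k *: ract x a + ract x b;
  bm_lact_assoc : forall a b x, lact (mul a b) x = lact a (lact b x);
  bm_ract_assoc : forall x a b, ract x (mul a b) = ract (ract x a) b;
  bm_compat : forall a x b, ract (lact a x) b = lact a (ract x b);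
  bm_lact_norm : forall a x, `|lact a x| <= `|a| * `|x|;
  bm_ract_norm : forall x a, `|ract x a| <= `|x| * `|a| }.

(* A continuous derivation D : A -> F^*, where F^* carries the dual actions
   (a.phi)(x) = phi(x.a), (phi.a)(x) = phi(a.x); an element of F^* is
   represented by a function F -> K. *)
Definition dual_derivation (A F : completeNormedModType K) (mul : A -> A -> A)
  (lact : A -> F -> F) (ract : F -> A -> F) (D : A -> F -> K) : Prop :=
  [/\ forall a, is_cont_functional (D a),
      forall (k : K) a b x, D (k *: a + b) x = k * D a x + D b x,
      exists C : K, forall a x, `|D a x| <= C * `|a| * `|x| &
      forall a b x, D (mul a b) x = D a (lact b x) + D b (ract x a)].

Definition dual_module_normal (A P F : completeNormedModType K)
  (pA : A -> P -> K) (lact : A -> F -> F) (ract : F -> A -> F) : Prop :=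
  forall phi : F -> K, is_cont_functional phi ->
    weak_continuous pA (fun (psi : F -> K) (x : F) => psi x)
                    (fun a => fun x => phi (ract x a)) /\
    weak_continuous pA (fun (psi : F -> K) (x : F) => psi x)
                    (fun a => fun x => phi (lact a x)).

(* Connes amenability: every normal dual Banach A-bimodule E = F^* (F = E_*,
   with E carrying the dual actions) has only inner w*-w* continuous
   derivations A -> E. *)
Definition connes_amenable (A P : completeNormedModType K)
  (mul : A -> A -> A) (pA : A -> P -> K) : Prop :=
  forall (F : completeNormedModType K) (lact : A -> F -> F) (ract : F -> A -> F),
    banach_bimodule mul lact ract ->
    dual_module_normal pA lact ract ->
    forall D : A -> F -> K,
      dual_derivation mul lact ract D ->
      weak_continuous pA (fun (psi : F -> K) (x : F) => psi x) D ->
      exists phi : F -> K, is_cont_functional phi /\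
        forall a x, D a x = phi (ract x a) - phi (lact a x).

Definition weak_pairing (A : completeNormedModType K) (x : A) (f : cdual A) : K :=
  proj1_sig f x.

Definition sigmawc (A P : completeNormedModType K) (mul : A -> A -> A)
  (pA : A -> P -> K) : set A :=
  [set x | weak_continuous pA (@weak_pairing A) (fun a => mul a x) /\
           weak_continuous pA (@weak_pairing A) (fun a => mul x a)].

(* A derivation D : A -> A^* (A^* with the dual
   actions of the bimodule A) is represented by D : A -> A -> K; j_A o D is
   a |-> (D a) restricted to sigmawc(A); its w*-w* continuity is continuity
   into sigmawc(A)^* with the topology sigma(sigmawc(A)^*, sigmawc(A)); it is
   inner if j_A (D a) = a.psi - psi.a for some psi in sigmawc(A)^*. *)
Definition weakly_connes_amenable (A P : completeNormedModType K)
  (mul : A -> A -> A) (pA : A -> P -> K) : Prop :=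
  forall D : A -> A -> K,
    dual_derivation mul mul mul D ->
    weak_continuous pA
      (fun (psi : A -> K) (x : {x : A | sigmawc mul pA x}) => psi (proj1_sig x)) D ->
    exists psi : A -> K,
      [/\ forall (k : K) u v, sigmawc mul pA u -> sigmawc mul pA v ->
            psi (k *: u + v) = k * psi u + psi v,
          {within sigmawc mul pA, continuous (psi : A -> K^o)} &
          forall a x, sigmawc mul pA x ->
            D a x = psi (mul x a) - psi (mul a x)].

End DualBanach.

(* Let F be sigma wc(A).  It is a norm-closed subspace of A stable under both
   multiplications, hence a Banach A-bimodule, and its dual is normal: for x in F
   and f in A^* the forms a |-> f(a x) and a |-> f(x a) are weak*-continuous,
   i.e. evaluations at predual elements, and every functional on F extends to A
   by Hahn-Banach.  A derivation D : A -> A^* with j_A o D weak*-continuous is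
   then a weak*-continuous derivation into F^*, which Connes amenability makes
   inner; the implementing functional is the one weak Connes amenability asks for.
   Two facts about the predual carry the argument: a weak*-continuous linear form
   vanishes on the common kernel of finitely many predual elements, hence is a
   combination of them; and the predual embeds isometrically in A^* (Hahn-Banach
   once more), so norm limits of predual evaluations are predual evaluations,
   which makes sigma wc(A) norm-closed. *)

From HB Require Import structures.
From mathcomp Require Import all_boot all_algebra.
From mathcomp Require Import all_classical all_reals all_analysis.
From mathcomp Require Import complex ring lra.

Set Implicit Arguments.
Unset Strict Implicit.
Unset Printing Implicit Defensive.

Import order.Order.TTheory GRing.Theory Num.Theory numFieldNormedType.Exports complex.
Local Open Scope ring_scope.
Local Open Scope classical_set_scope.
Local Open Scope complex_scope.

(** * Linear forms *)

Section LinearForms.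
Variables (K : pzRingType) (U : lmodType K).

Definition lin_form (g : U -> K) := forall k u v, g (k *: u + v) = k * g u + g v.

Definition subspace_set (S : set U) := S 0 /\ forall k u v, S u -> S v -> S (k *: u + v).

Definition lin_form_on (S : set U) (g : U -> K) :=
  forall k u v, S u -> S v -> g (k *: u + v) = k * g u + g v.

Lemma lin_form_on0 (S : set U) g : S 0 -> lin_form_on S g -> g 0 = 0.
Proof.
move=> S0 g_lin; have /eqP := g_lin 1 _ _ S0 S0; rewrite scale1r addr0 mul1r.
by rewrite -subr_eq0 opprD addrA subrr add0r oppr_eq0 => /eqP.
Qed.

Section SubspaceSet.
Variables (S : set U) (S_sub : subspace_set S).

Lemma subspace_setD u v : S u -> S v -> S (u + v).
Proof. by move=> Su Sv; have := S_sub.2 1 _ _ Su Sv; rewrite scale1r. Qed.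

Lemma subspace_setZ k v : S v -> S (k *: v).
Proof. by move=> Sv; have := S_sub.2 k _ _ Sv S_sub.1; rewrite addr0. Qed.

Lemma subspace_setN v : S v -> S (- v).
Proof. by rewrite -scaleN1r; exact: subspace_setZ. Qed.

End SubspaceSet.

Variable g : U -> K.
Hypothesis g_lin : lin_form g.

Lemma lin_formD u v : g (u + v) = g u + g v.
Proof. by have := g_lin 1 u v; rewrite scale1r mul1r. Qed.

Lemma lin_form0 : g 0 = 0.
Proof. exact: (@lin_form_on0 setT). Qed.

Lemma lin_formZ k u : g (k *: u) = k * g u.
Proof. by rewrite -[k *: u]addr0 g_lin lin_form0 addr0. Qed.

Lemma lin_formB u v : g (u - v) = g u - g v.
Proof. by rewrite lin_formD -scaleN1r lin_formZ mulN1r. Qed.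

End LinearForms.

Lemma lin_form_span (K : fieldType) (U : lmodType K) (n : nat)
    (fs : 'I_n -> U -> K) (g : U -> K) :
  (forall i, lin_form (fs i)) -> lin_form g ->
  (forall u, (forall i, fs i u = 0) -> g u = 0) ->
  exists c : 'I_n -> K, forall u, g u = \sum_(i < n) c i * fs i u.
Proof.
elim: n fs g => [|n IHn] fs g fs_lin g_lin g_ker.
  by exists (fun=> 0) => u; rewrite big_ord0 g_ker // => -[].
pose l := fs ord0; pose fs' j := fs (lift ord0 j).
have l_lin : lin_form l := fs_lin ord0.
have fs'_lin j : lin_form (fs' j) := fs_lin _.
suff [a [c' g_comb]] : exists a (c' : 'I_n -> K),
    forall u, g u = a * l u + \sum_(j < n) c' j * fs' j u.
  exists (fun i => if unlift ord0 i is Some j then c' j else a) => u.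
  rewrite big_ord_recl unlift_none g_comb; congr (_ + _).
  by apply: eq_bigr => j _; rewrite liftK.
have fs_ker u : l u = 0 -> (forall j, fs' j u = 0) -> forall i, fs i u = 0.
  by move=> lu fs'u i; case: (unliftP ord0 i) => [j ->|->]; [apply: fs'u | apply: lu].
have [[z [fs'z lz]]|l_ker] := pselect (exists z, (forall j, fs' j z = 0) /\ l z != 0).
- pose a := g z / l z.
  have g'_lin : lin_form (fun u => g u - a * l u).
    by move=> k u v; rewrite g_lin l_lin; ring.
  have g'_ker u : (forall j, fs' j u = 0) -> g u - a * l u = 0.
    move=> fs'u.
    have w_ker i : fs i (u - (l u / l z) *: z) = 0.
      apply: fs_ker => [|j].
        by rewrite (lin_formB l_lin) (lin_formZ l_lin) divfK // subrr.
      by rewrite (lin_formB (fs'_lin j)) (lin_formZ (fs'_lin j)) fs'u fs'z mulr0 subr0.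
    have /eqP := g_ker _ w_ker; rewrite (lin_formB g_lin) (lin_formZ g_lin) subr_eq0 => /eqP ->.
    by rewrite /a; field.
  have [c' g'_comb] := IHn fs' _ fs'_lin g'_lin g'_ker.
  by exists a, c' => u; rewrite -g'_comb; ring.
- have g_ker' u : (forall j, fs' j u = 0) -> g u = 0.
    move=> fs'u; apply/g_ker/fs_ker => //.
    by apply: contrapT => /eqP lu; apply: l_ker; exists u.
  have [c' g_comb] := IHn fs' g fs'_lin g_lin g_ker'.
  by exists 0, c' => u; rewrite mul0r add0r.
Qed.

(** * Hahn-Banach *)

Section RealHahnBanach.
Variables (R : realType) (V : lmodType R) (p : V -> R).
Hypothesis p_subadd : forall u v, p (u + v) <= p u + p v.
Hypothesis p_homo : forall (t : R) v, 0 < t -> p (t *: v) = t * p v.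

(* p-dominated linear forms on subspaces of V, encoded by their graphs *)
Definition dominated_graph (G : set (V * R)) :=
  [/\ G (0, 0), (forall v r s, G (v, r) -> G (v, s) -> r = s),
      (forall t u v r s, G (u, r) -> G (v, s) -> G (t *: u + v, t * r + s)) &
      (forall v r, G (v, r) -> r <= p v)].

Section DominatedGraph.
Variable G : set (V * R).
Hypothesis domG : dominated_graph G.

Lemma dominated_graphD u v r s : G (u, r) -> G (v, s) -> G (u + v, r + s).
Proof. by case: domG => _ _ Glin _ /(Glin 1) /[apply]; rewrite scale1r mul1r. Qed.

Lemma dominated_graphZ t v r : G (v, r) -> G (t *: v, t * r).
Proof. by case: domG => G0 _ Glin _ /(Glin t) /(_ G0); rewrite !addr0. Qed.

Lemma dominated_graph_gap v : exists r, forall d h, G (d, h) ->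
  h - p (d - v) <= r /\ r <= p (d + v) - h.
Proof.
case: domG => G0 _ _ Gp.
have gap d1 h1 d2 h2 : G (d1, h1) -> G (d2, h2) -> h1 - p (d1 - v) <= p (d2 + v) - h2.
  move=> G1 G2; have := Gp _ _ (dominated_graphD G1 G2).
  have := p_subadd (d1 - v) (d2 + v); rewrite addrACA addNr addr0; lra.
pose L := [set x | exists d h, G (d, h) /\ x = h - p (d - v)].
have supL : has_sup L.
  split; first by exists (0 - p (0 - v)), 0, 0.
  by exists (p (0 + v) - 0) => _ [d [h [Gdh ->]]]; exact: gap.
exists (sup L) => d h Gdh; split.
  by apply: sup_upper_bound => //; exists d, h.
by apply: ge_sup; [case: supL | move=> _ [d' [h' [Gdh' ->]]]; exact: gap].
Qed.

Lemma gap_value_dominates v r :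
    (forall d h, G (d, h) -> h - p (d - v) <= r /\ r <= p (d + v) - h) ->
  forall d h t, G (d, h) -> h + t * r <= p (d + t *: v).
Proof.
move=> r_gap d h t Gdh; case: domG => _ _ _ Gp.
have [t0|t0|->] := ltgtP t 0; last by rewrite scale0r mul0r !addr0; exact: Gp.
- have s0 : 0 < - t by rewrite oppr_gt0.
  have [+ _] := r_gap _ _ (dominated_graphZ (- t)^-1 Gdh).
  have -> : (- t)^-1 *: d - v = (- t)^-1 *: (d + t *: v).
    by rewrite scalerDr scalerA invrN mulNr mulVf ?ltr0_neq0 // scaleN1r.
  rewrite p_homo ?invr_gt0 // -mulrBr => hr.
  have := ler_wpM2l (ltW s0) hr.
  by rewrite mulrA mulfV ?lt0r_neq0 // mul1r; lra.
- have [_ +] := r_gap _ _ (dominated_graphZ t^-1 Gdh).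
  have -> : t^-1 *: d + v = t^-1 *: (d + t *: v).
    by rewrite scalerDr scalerA mulVf ?lt0r_neq0 // scale1r.
  rewrite p_homo ?invr_gt0 // -mulrBr => hr.
  have := ler_wpM2l (ltW t0) hr.
  by rewrite mulrA mulfV ?lt0r_neq0 // mul1r; lra.
Qed.

Lemma dominated_graph_extend v : ~ (exists r, G (v, r)) ->
  exists2 G', dominated_graph G' & G `<=` G' /\ exists r, G' (v, r).
Proof.
move=> Gv; case: domG => G0 Gfun Glin Gp.
have [r r_gap] := dominated_graph_gap v.
exists [set x | exists d h t, G (d, h) /\ x = (d + t *: v, h + t * r)]; last first.
  split; last by exists r, 0, 0, 1; rewrite scale1r mul1r !add0r.
  by move=> [d h] Gdh; exists d, h, 0; rewrite scale0r mul0r !addr0.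
split.
- by exists 0, 0, 0; rewrite scale0r mul0r !addr0.
- move=> _ _ _ [d1 [h1 [t1 [G1 [-> ->]]]]] [d2 [h2 [t2 [G2 [ed ->]]]]].
  have [t12|t12] := eqVneq t1 t2.
    by rewrite -t12 in ed; rewrite (addIr _ ed) in G1; rewrite (Gfun _ _ _ G1 G2) t12.
  have e : (t1 - t2) *: v = d2 - d1.
    by apply/eqP; rewrite scalerBl subr_eq addrAC -ed addrC addKr.
  have := dominated_graphZ (t1 - t2)^-1 (dominated_graphD G2 (dominated_graphZ (-1) G1)).
  rewrite scaleN1r -e scalerA mulVf ?subr_eq0 // scale1r => Gvr.
  by case: Gv; eexists; exact: Gvr.
- move=> t _ _ _ _ [d1 [h1 [t1 [G1 [-> ->]]]]] [d2 [h2 [t2 [G2 [-> ->]]]]].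
  exists (t *: d1 + d2), (t * h1 + h2), (t * t1 + t2); split; first exact: Glin.
  congr pair; last by ring.
  by rewrite scalerDr scalerA scalerDl addrACA.
- by move=> _ _ [d [h [t [Gdh [-> ->]]]]]; exact: gap_value_dominates.
Qed.

End DominatedGraph.

Lemma dominated_graph_chain (G0 : set (V * R)) (F : set (set (V * R))) :
  dominated_graph G0 -> (forall G, F G -> dominated_graph (G0 `|` G)) ->
  total_on F subset -> dominated_graph (G0 `|` \bigcup_(G in F) G).
Proof.
move=> domG0 domF Ftot; set U := G0 `|` _.
have inU G : F G -> G0 `|` G `<=` U by move=> FG x [?|?]; [left | right; exists G].
have common x y : U x -> U y -> exists G, [/\ dominated_graph G, G `<=` U, G x & G y].
  move=> [G0x|[X FX Xx]] [G0y|[Y FY Yy]].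
  - by exists G0; split => // z; left.
  - by exists (G0 `|` Y); split; [exact: domF | exact: inU | left | right].
  - by exists (G0 `|` X); split; [exact: domF | exact: inU | right | left].
  - have [XY|YX] := Ftot _ _ FX FY.
    + by exists (G0 `|` Y); split; [exact: domF | exact: inU | right; exact: XY | right].
    + by exists (G0 `|` X); split; [exact: domF | exact: inU | right | right; exact: YX].
split.
- by left; case: domG0.
- by move=> v r s /common /[apply] -[G [[_ Gfun _ _] _ Gr Gs]]; exact: Gfun Gr Gs.
- by move=> t u v r s /common /[apply] -[G [[_ _ Glin _] GU Gr Gs]]; exact/GU/Glin.
- by move=> v r /[dup] /common /[apply] -[G [[_ _ _ Gp] _ Gr _]]; exact: Gp Gr.
Qed.

Variables (S : set V) (f : V -> R).
Hypotheses (S_sub : subspace_set S) (f_lin : lin_form_on S f).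
Hypothesis f_le : forall v, S v -> f v <= p v.

Theorem hahn_banach_real : exists F : V -> R,
  [/\ lin_form F, forall v, S v -> F v = f v & forall v, F v <= p v].
Proof.
have [S0 SD] := S_sub.
pose G0 := [set x : V * R | S x.1 /\ x.2 = f x.1].
have domG0 : dominated_graph G0.
  split => [| v r s [_ /= ->] [_ /= ->] // | t u v r s [/= Su ->] [/= Sv ->] | v r [/= Sv ->]].
  - by split => //=; rewrite (lin_form_on0 S0 f_lin).
  - by split; [exact: SD | rewrite /= f_lin].
  - exact: f_le.
have [H [domH Hmax]] := Zorn_bigcup (P := fun G => dominated_graph (G0 `|` G))
  (fun F => @dominated_graph_chain G0 F domG0).
have Htot v : exists r, (G0 `|` H) (v, r).
  apply: contrapT => Hv; have [G' domG' [HG' [r G'v]]] := dominated_graph_extend domH Hv.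
  apply: (Hmax G').
    split => [x Hx|G'H]; first by apply: HG'; right.
    by apply: Hv; exists r; right; exact: G'H.
  by rewrite (_ : G0 `|` G' = G') // setUidr // => x G0x; apply: HG'; left.
pose F v := projT1 (cid (Htot v)).
have HF v : (G0 `|` H) (v, F v) by rewrite /F; case: cid.
case: domH => _ Hfun Hlin Hp.
exists F; split => [t u v | v Sv | v]; last exact: Hp.
- exact: Hfun (HF _) (Hlin _ _ _ _ _ (HF u) (HF v)).
- by apply: Hfun (HF v) _; left.
Qed.

End RealHahnBanach.

Section ComplexArith.
Variable R : realType.

Lemma real_complexM (t a b : R) : t%:C * (a +i* b) = (t * a) +i* (t * b).
Proof. by apply: (f_equal2 (@Complex R)); ring. Qed.

Lemma mul_ic (a b : R) : 'i * (a +i* b) = (- b) +i* a.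
Proof. by apply: (f_equal2 (@Complex R)); ring. Qed.

Lemma ReD (x y : R[i]) : Re (x + y) = Re x + Re y.
Proof. by case: x => a b; case: y => c d. Qed.

Lemma Re_real_complexM (t : R) (z : R[i]) : Re (t%:C * z) = t * Re z.
Proof. by case: z => a b; rewrite real_complexM. Qed.

Lemma Re_le_norm (z : R[i]) : Re z <= Re `|z|.
Proof.
have := normc_ge_Re z; rewrite lecE => /andP[_ /= Rez]; exact: le_trans (ler_norm _) Rez.
Qed.

End ComplexArith.

Section Realification.
Variables (R : realType) (V : lmodType R[i]).

Definition realification : Type := V.
HB.instance Definition _ := GRing.Zmodule.on realification.

Definition real_scale (t : R) (v : realification) : realification := t%:C *: (v : V).

Lemma real_scaleA a b v : real_scale a (real_scale b v) = real_scale (a * b) v.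
Proof. by rewrite /real_scale scalerA -rmorphM. Qed.

Lemma real_scale1 : left_id 1 real_scale.
Proof. by move=> v; rewrite /real_scale rmorph1 scale1r. Qed.

Lemma real_scaleDr : right_distributive real_scale +%R.
Proof. by move=> t u v; rewrite /real_scale scalerDr. Qed.

Lemma real_scaleDl v : {morph real_scale^~ v : a b / a + b}.
Proof. by move=> a b; rewrite /real_scale rmorphD scalerDl. Qed.

HB.instance Definition _ := GRing.Zmodule_isLmodule.Build R realification
  real_scaleA real_scale1 real_scaleDr real_scaleDl.

(* a complex linear form f is recovered from its real part as Re (f v) - i Re (f (i v)) *)
Definition form_of_Re (U : V -> R) (v : V) : R[i] := U v +i* - U ('i *: v).

Lemma form_of_Re_lin (U : realification -> R) : lin_form U -> lin_form (form_of_Re U).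
Proof.
move=> U_lin; set F := form_of_Re U.
have U_opp v : U (- v) = - U v.
  have := lin_formZ U_lin (-1) v; rewrite mulN1r.
  by change (U ((-1)%:C *: v) = - U v -> U (- v) = - U v); rewrite rmorphN1 scaleN1r.
have F_real (t : R) u v : F (t%:C *: u + v) = t%:C * F u + F v.
  rewrite /F /form_of_Re scalerDr (scalerA 'i) [_ * t%:C]mulrC -scalerA.
  rewrite -[t%:C *: u]/(real_scale t u) -[t%:C *: ('i *: u)]/(real_scale t ('i *: u)).
  by rewrite !U_lin real_complexM; apply: (f_equal2 (@Complex R)); ring.
have F_i v : F ('i *: v) = 'i * F v.
  by rewrite /F /form_of_Re scalerA -expr2 sqr_i scaleN1r U_opp mul_ic !opprK.
move=> k u v.
have -> : k *: u = (Re k)%:C *: u + (Im k)%:C *: ('i *: u).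
  by rewrite scalerA [_ * 'i]mulrC -scalerDl -complexE.
by rewrite -addrA !F_real F_i [in RHS](complexE k) mulrDl -addrA -mulrA [(Im k)%:C * _]mulrCA.
Qed.

End Realification.

Section ComplexHahnBanach.
Variables (R : realType) (V : lmodType R[i]) (p : V -> R).
Hypothesis p_subadd : forall u v, p (u + v) <= p u + p v.
Hypothesis p_homo : forall (t : R) v, 0 < t -> p (t%:C *: v) = t * p v.
Hypothesis p_balanced : forall (w : R[i]) v, `|w| = 1 -> p (w *: v) = p v.

(* rotating v by a unimodular scalar makes [F v] real and nonnegative *)
Lemma norm_le_of_Re_le (F : V -> R[i]) : lin_form F -> (forall v, Re (F v) <= p v) ->
  forall v, `|F v| <= (p v)%:C.
Proof.
move=> F_lin F_Re v.
have [w w1 wF] : exists2 w : R[i], `|w| = 1 & w * F v = `|F v|.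
  have [->|Fv0] := eqVneq (F v) 0; first by exists 1; rewrite ?normr1 ?mul1r ?normr0.
  exists ((F v)^* / `|F v|); first by rewrite normrM normcJ normfV normr_id divff ?normr_eq0.
  by rewrite mulrAC [_^* * _]mulrC -sqr_normc expr2 mulfK ?normr_eq0.
rewrite -(RRe_real (normr_real (F v))) lecR -wF -(lin_formZ F_lin) -(p_balanced v w1).
exact: F_Re.
Qed.

Variables (S : set V) (f : V -> R[i]).
Hypotheses (S_sub : subspace_set S) (f_lin : lin_form_on S f).
Hypothesis f_le : forall v, S v -> `|f v| <= (p v)%:C.

Theorem hahn_banach_complex : exists F : V -> R[i],
  [/\ lin_form F, forall v, S v -> F v = f v & forall v, `|F v| <= (p v)%:C].
Proof.
have [S0 SD] := S_sub.
have [|||U [U_lin U_f U_p]] :=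
  @hahn_banach_real R (realification V) p p_subadd p_homo S (fun v => Re (f v)).
- by split => // t u v; exact: SD.
- by move=> t u v Su Sv /=; rewrite f_lin // ReD Re_real_complexM.
- by move=> v Sv; apply: le_trans (Re_le_norm _) _; have := f_le Sv; rewrite lecE => /andP[].
exists (form_of_Re U); split.
- exact: form_of_Re_lin.
- move=> v Sv; have Siv : S ('i *: v) by rewrite -[_ *: v]addr0; exact: SD.
  have fi : f ('i *: v) = 'i * f v.
    by rewrite -[_ *: v]addr0 f_lin // (lin_form_on0 S0 f_lin) addr0.
  by rewrite /form_of_Re !U_f // fi; case: (f v) => a b; rewrite mul_ic /= opprK.
- by apply: norm_le_of_Re_le => //; exact: form_of_Re_lin.
Qed.

End ComplexHahnBanach.

(** * Bounded linear maps *)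

Section BoundedLinear.
Variables (K : numFieldType) (V W : normedModType K).

Lemma lin_bound_continuous (T : V -> W) (c : K) : 0 <= c -> linear T ->
  (forall v, `|T v| <= c * `|v|) -> continuous T.
Proof.
move=> c0 T_lin T_le.
pose TL : {linear V -> W} := HB.pack T (GRing.isLinear.Build K V W *:%R T T_lin).
apply: (@bounded_linear_continuous _ _ _ TL); apply/bounded_funP => r.
by exists (c * r) => x xr; apply: le_trans (T_le x) _; rewrite ler_wpM2l.
Qed.

Lemma continuous_lin_bound (T : V -> W) : linear T -> continuous T ->
  exists2 c, 0 < c & forall v, `|T v| <= c * `|v|.
Proof.
move=> T_lin T_cont.
pose TL : {linear V -> W} := HB.pack T (GRing.isLinear.Build K V W *:%R T T_lin).
have /linear_boundedP := @continuous_linear_bounded _ _ _ 0 TL (T_cont 0).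
exact: pinfty_ex_gt0.
Qed.

End BoundedLinear.

Section ContinuousFunctional.
Variables (K : numFieldType) (U V : normedModType K).

Lemma cont_functional_bound (f : V -> K) : is_cont_functional f ->
  exists2 c, 0 < c & forall v, `|f v| <= c * `|v|.
Proof. by case=> f_lin f_cont; exact: (@continuous_lin_bound _ _ K^o f). Qed.

Lemma bound_cont_functional (f : V -> K) (c : K) : 0 <= c -> lin_form f ->
  (forall v, `|f v| <= c * `|v|) -> is_cont_functional f.
Proof. by move=> c0 f_lin f_le; split => //; exact: (@lin_bound_continuous _ _ K^o f c). Qed.

Lemma cont_functional_comp (f : V -> K) (T : U -> V) (c : K) :
  is_cont_functional f -> linear T -> 0 <= c -> (forall u, `|T u| <= c * `|u|) ->
  is_cont_functional (f \o T).
Proof.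
move=> [f_lin f_cont] T_lin c0 T_le; split => [k u v|x]; first by rewrite /= T_lin f_lin.
by apply: continuous_comp; [exact: (lin_bound_continuous c0 T_lin T_le) | exact: f_cont].
Qed.

End ContinuousFunctional.

Theorem hahn_banach_normed (R : realType) (V : normedModType R[i]) (S : set V)
    (f : V -> R[i]) (c : R[i]) :
  subspace_set S -> lin_form_on S f -> 0 <= c -> (forall v, S v -> `|f v| <= c * `|v|) ->
  exists F : V -> R[i],
    [/\ is_cont_functional F, forall v, S v -> F v = f v & forall v, `|F v| <= c * `|v|].
Proof.
move=> S_sub f_lin c0 f_le.
pose p (v : V) := Re (c * `|v|).
have pE v : (p v)%:C = c * `|v| by apply/RRe_real/ger0_real/mulr_ge0.
have p_subadd u v : p (u + v) <= p u + p v.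
  rewrite /p -ReD; have := ler_wpM2l c0 (ler_normD u v).
  by rewrite mulrDr lecE => /andP[].
have p_homo (t : R) v : 0 < t -> p (t%:C *: v) = t * p v.
  by move=> t0; rewrite /p normrZ gtr0_norm ?ltcR // mulrCA Re_real_complexM.
have p_balanced (w : R[i]) v : `|w| = 1 -> p (w *: v) = p v.
  by move=> w1; rewrite /p normrZ w1 mul1r.
have [|F [F_lin F_f F_le]] := hahn_banach_complex p_subadd p_homo p_balanced S_sub f_lin.
  by move=> v Sv; rewrite pE; exact: f_le.
have F_le' v : `|F v| <= c * `|v| by rewrite -pE.
by exists F; split => //; exact: bound_cont_functional F_le'.
Qed.

(** * Weak*-continuous forms and the predual *)

Definition predual_form (K : numFieldType) (A P : Type) (pA : A -> P -> K) (h : A -> K) :=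
  exists q, forall a, h a = pA a q.

Lemma predual_form_weak_continuous (K : numFieldType) (A P Z W : Type)
    (pA : A -> P -> K) (q : Z -> W -> K) (G : A -> Z) :
  (forall w, predual_form pA (fun a => q (G a) w)) -> weak_continuous pA q G.
Proof.
move=> G_pre x0 N [n [ws [e [e0 N_ws]]]].
have /choice[qs qsE] := fun i => G_pre (ws i).
exists n, qs, e; split => // x x_near; apply: N_ws => i.
by rewrite !qsE; exact: x_near.
Qed.

Section Predual.
Variables (K : numFieldType) (A P : completeNormedModType K) (pA : A -> P -> K).
Hypothesis hdp : dual_pairing pA.

Lemma dual_pairing_linl q : lin_form (pA^~ q).
Proof. by move=> k a b; exact: (dp_linl hdp). Qed.

Lemma dual_pairing_linr a : lin_form (pA a).
Proof. exact: (dp_cont hdp a).1. Qed.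

Lemma dual_pairing_sum a n (c : 'I_n -> K) (qs : 'I_n -> P) :
  pA a (\sum_(i < n) c i *: qs i) = \sum_(i < n) c i * pA a (qs i).
Proof.
elim/big_rec2: _ => [|i x y _ <-]; first exact: lin_form0 (dual_pairing_linr a).
by rewrite (dual_pairing_linr a).
Qed.

(* h is bounded on a weak* neighbourhood of 0 cut out by finitely many predual
   elements, so it vanishes on their common kernel *)
Lemma weak_continuous_predual_form (Z W : Type) (q : Z -> W -> K) (G : A -> Z) (w : W) :
  lin_form (fun a => q (G a) w) -> weak_continuous pA q G ->
  predual_form pA (fun a => q (G a) w).
Proof.
move=> h_lin G_wc; set h := fun a => _ in h_lin *.
have [n [qs [e [e0 near0]]]] :
    weak_nbhs pA 0 (G @^-1` [set z | `|q z w - q (G 0) w| < 1]).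
  by apply: G_wc; exists 1%N, (fun=> w), 1; split => // z /(_ ord0).
have h_ker a : (forall i, pA a (qs i) = 0) -> h a = 0.
  move=> a_ker; apply: contrapT => /eqP ha.
  have /near0 : forall i, `|pA ((2 / h a) *: a) (qs i) - pA 0 (qs i)| < e.
    move=> i; rewrite (lin_formZ (dual_pairing_linl _)) a_ker mulr0 (lin_form0 (dual_pairing_linl _)).
    by rewrite subrr normr0.
  rewrite /= -/(h _) -/(h 0) (lin_form0 h_lin) subr0 (lin_formZ h_lin) divfK //.
  by rewrite normr_nat ltrn1.
have [c hc] := lin_form_span (fun i => dual_pairing_linl (qs i)) h_lin h_ker.
by exists (\sum_(i < n) c i *: qs i) => a; rewrite dual_pairing_sum; exact: hc.
Qed.

Lemma predual_form_comp (G : A -> A) (q : P) : linear G -> weak_continuous pA pA G ->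
  predual_form pA (fun a => pA (G a) q).
Proof.
move=> G_lin G_wc; apply: weak_continuous_predual_form G_wc => k a b.
by rewrite G_lin (dual_pairing_linl q).
Qed.

End Predual.

Section ComplexPredual.
Variables (R : realType) (A P : completeNormedModType R[i]) (pA : A -> P -> R[i]).
Hypothesis hdp : dual_pairing pA.

Lemma predual_norming (q : P) : exists2 b : A, `|b| <= 1 & pA b q = `|q|.
Proof.
have [->|q0] := eqVneq q 0.
  by exists 0; rewrite ?normr0 ?ler01 // (lin_form0 (dual_pairing_linr hdp 0)).
pose S := [set v : P | exists k, v = k *: q].
pose coef v := xget 0 [set k | v = k *: q].
have coefZ k : coef (k *: q) = k.
  apply: xget_unique => // k' /eqP; rewrite eq_sym -subr_eq0 -scalerBl.
  by rewrite scaler_eq0 (negbTE q0) orbF subr_eq0 => /eqP.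
have S_sub : subspace_set S.
  split; first by exists 0; rewrite scale0r.
  by move=> k _ _ [a ->] [b ->]; exists (k * a + b); rewrite scalerDl scalerA.
have f_lin : lin_form_on S (fun v => coef v * `|q|).
  by move=> k _ _ [a ->] [b ->]; rewrite scalerA -scalerDl !coefZ mulrDl mulrA.
have f_le v : S v -> `|coef v * `|q| | <= 1 * `|v|.
  by move=> [a ->]; rewrite coefZ mul1r normrM normr_id normrZ.
have [F [F_cont F_f F_le]] := hahn_banach_normed S_sub f_lin ler01 f_le.
have [b bF] := dp_onto hdp F_cont.
exists b.
  apply/ler_addgt0Pr => e e0; have [x [x1 bx]] := dp_isom_ge hdp b e0.
  rewrite -lerBlDr; apply/ltW/(lt_le_trans bx).
  by rewrite bF; apply: le_trans (F_le x) _; rewrite mul1r.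
by rewrite bF F_f; [rewrite -[q in coef q]scale1r coefZ mul1r | exists 1; rewrite scale1r].
Qed.

Lemma predual_norm_le (q : P) (M : R[i]) : 0 <= M ->
  (forall a, `|pA a q| <= M * `|a|) -> `|q| <= M.
Proof.
move=> M0 qM; have [b b1 bq] := predual_norming q.
by rewrite -[`|q|]normr_id -bq; apply: le_trans (qM b) _; rewrite ler_piMr.
Qed.

Lemma predual_approx_close (g : A -> R[i]) (e : R[i]) (x y : P) : 0 <= e ->
  (forall a, `|g a - pA a x| <= e * `|a|) -> (forall a, `|g a - pA a y| <= e * `|a|) ->
  `|x - y| <= e + e.
Proof.
move=> e0 gx gy; apply: predual_norm_le; first exact: addr_ge0.
move=> a; rewrite (lin_formB (dual_pairing_linr hdp a)) mulrDl.
have -> : pA a x - pA a y = (g a - pA a y) - (g a - pA a x) by ring.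
by apply: le_trans (ler_normB _ _) _; exact: lerD.
Qed.

Lemma predual_approx_limit (g : A -> R[i]) (l : P) :
    (forall d, 0 < d -> exists y, (forall a, `|g a - pA a y| <= d * `|a|) /\ `|y - l| < d) ->
  forall a, g a = pA a l.
Proof.
move=> l_approx a; apply/eqP; rewrite -subr_eq0 -normr_le0.
apply/ler_addgt0Pr => e e0; rewrite add0r.
have a0 : 0 < 2 * `|a| + 1 by rewrite ltr_wpDl // mulr_ge0.
pose d := e / (2 * `|a| + 1); have d0 : 0 < d by rewrite divr_gt0.
have [y [gy yl]] := l_approx d d0.
have -> : g a - pA a l = (g a - pA a y) + pA a (y - l).
  by rewrite (lin_formB (dual_pairing_linr hdp a)); ring.
apply: le_trans (ler_normD _ _) _; apply: le_trans (lerD (gy a) (dp_isom_le hdp a _)) _.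
apply: le_trans (lerD (lexx _) (ler_wpM2l (normr_ge0 a) (ltW yl))) _.
rewrite [`|a| * d]mulrC -mulrDr -[e](divfK (lt0r_neq0 a0)).
apply: ler_wpM2l; first exact: ltW.
by rewrite mulr_natl mulr2n lerDl ler01.
Qed.

Lemma predual_form_closed (g : A -> R[i]) :
  (forall e, 0 < e -> exists q, forall a, `|g a - pA a q| <= e * `|a|) ->
  predual_form pA g.
Proof.
move=> g_approx.
pose Q e := [set q : P | forall a, `|g a - pA a q| <= e * `|a|].
pose FF := filter_from [set e : R[i] | 0 < e] Q.
have FF_filter : ProperFilter FF.
  apply: filter_from_proper; last by move=> e /g_approx.
  apply: filter_from_filter; first by exists 1; exact: ltr01.
  have Q_mono i j : 0 <= i <= j -> Q i `<=` Q j.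
    by move=> /andP[i0 ij] q Qq a; apply: le_trans (Qq a) _; exact: ler_wpM2r.
  move=> i j i0 j0; have [ij|ji] := real_leP (gtr0_real i0) (gtr0_real j0).
  - by exists i => // q Qq; split => //; apply: Q_mono Qq; rewrite ltW.
  - by exists j => // q Qq; split => //; apply: Q_mono Qq; rewrite !ltW.
have FF_cauchy : cauchy FF.
  apply: cauchy_exP => e e0; have e4 : 0 < e / 2 / 2 by rewrite !divr_gt0.
  have [x Qx] := g_approx _ e4; exists x, (e / 2 / 2) => // y Qy.
  rewrite -ball_normE /=; apply: le_lt_trans (predual_approx_close (ltW e4) Qx Qy) _.
  by rewrite -splitr ltr_pdivrMr // ltr_pMr // ltr1n.
have FFl : FF --> lim FF by apply/cauchy_cvgP.
exists (lim FF); apply: predual_approx_limit => d d0.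
have FFQ : FF (Q d) by exists d.
have [y [Qy ly]] := filter_ex (filterI FFQ (FFl _ (nbhsx_ballx (lim FF) _ d0))).
by exists y; split => //; move: ly; rewrite -ball_normE /= distrC.
Qed.

End ComplexPredual.

(** * Closed subspaces *)

Section ClosedSubspace.
Variables (K : numFieldType) (A : completeNormedModType K) (S : set A).
Hypotheses (S_sub : subspace_set S) (S_closed : closed S).

(* the proofs are parameters so that the Banach space structure below can use them *)
Definition closed_subspace of subspace_set S & closed S : Type := {x : A | S x}.
Local Notation B := (closed_subspace S_sub S_closed).
HB.instance Definition _ := gen_eqMixin B.
HB.instance Definition _ := gen_choiceMixin B.

Definition cs_zero : B := exist _ 0 S_sub.1.
Definition cs_add (x y : B) : B := exist _ (sval x + sval y) (subspace_setD S_sub (svalP x) (svalP y)).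
Definition cs_scale k (x : B) : B := exist _ (k *: sval x) (subspace_setZ S_sub k (svalP x)).
Definition cs_opp (x : B) : B := exist _ (- sval x) (subspace_setN S_sub (svalP x)).

Lemma cs_addA : associative cs_add.
Proof. by move=> x y z; apply: eq_exist; rewrite addrA. Qed.
Lemma cs_addC : commutative cs_add.
Proof. by move=> x y; apply: eq_exist; rewrite addrC. Qed.
Lemma cs_add0 : left_id cs_zero cs_add.
Proof. by move=> [x Sx]; apply: eq_exist; rewrite add0r. Qed.
Lemma cs_addN : left_inverse cs_zero cs_opp cs_add.
Proof. by move=> x; apply: eq_exist; rewrite addNr. Qed.
HB.instance Definition _ := GRing.isZmodule.Build B cs_addA cs_addC cs_add0 cs_addN.

Lemma cs_scaleA a b x : cs_scale a (cs_scale b x) = cs_scale (a * b) x.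
Proof. by apply: eq_exist; rewrite scalerA. Qed.
Lemma cs_scale1 : left_id 1 cs_scale.
Proof. by move=> [x Sx]; apply: eq_exist; rewrite scale1r. Qed.
Lemma cs_scaleDr : right_distributive cs_scale +%R.
Proof. by move=> a x y; apply: eq_exist; rewrite scalerDr. Qed.
Lemma cs_scaleDl x : {morph cs_scale^~ x : a b / a + b}.
Proof. by move=> a b; apply: eq_exist; rewrite scalerDl. Qed.
HB.instance Definition _ := GRing.Zmodule_isLmodule.Build K B
  cs_scaleA cs_scale1 cs_scaleDr cs_scaleDl.

Definition cs_norm (x : B) : K := `|sval x|.
Lemma cs_normD x y : cs_norm (x + y) <= cs_norm x + cs_norm y.
Proof. exact: ler_normD. Qed.
Lemma cs_normZ k x : cs_norm (k *: x) = `|k| * cs_norm x.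
Proof. exact: normrZ. Qed.
Lemma cs_norm_eq0 x : cs_norm x = 0 -> x = 0.
Proof. by case: x => x Sx /normr0_eq0 /= x0; apply: eq_exist. Qed.
HB.instance Definition _ := Lmodule_isNormed.Build K B cs_normD cs_normZ cs_norm_eq0.

Lemma cs_complete (F : set_system B) : ProperFilter F -> cauchy F -> cvg F.
Proof.
move=> FF /cauchyP F_cauchy.
have sF_cauchy : cauchy (sval @ F).
  apply/cauchyP => e e0; have [x Fx] := F_cauchy e e0; exists (sval x).
  by rewrite /= /fmap /=; move: Fx; apply: filterS => y; rewrite -!ball_normE.
have sF_cvg : sval @ F --> lim (sval @ F) by apply/cauchy_cvgP.
have Sl : S (lim (sval @ F)).
  apply: (@closed_cvg _ _ F FF sval S S_closed _ _ sF_cvg).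
  by apply: filterE => x; exact: svalP.
apply/cvg_ex; exists (exist _ _ Sl); apply/cvgrPdist_lt => e e0.
exact: (cvgrPdist_lt _ _).1 sF_cvg e e0.
Qed.
HB.instance Definition _ := Uniform_isComplete.Build B cs_complete.

End ClosedSubspace.

Lemma closed_subspace_extend (R : realType) (A : completeNormedModType R[i]) (S : set A)
    (S_sub : subspace_set S) (S_closed : closed S)
    (phi : closed_subspace S_sub S_closed -> R[i]) :
  is_cont_functional phi ->
  exists Phi : A -> R[i], is_cont_functional Phi /\ forall x, Phi (sval x) = phi x.
Proof.
move=> phi_cont; have [c c0 phi_le] := cont_functional_bound phi_cont.
pose f v := if pselect (S v) is left Sv then phi (exist _ v Sv) else 0.
have fE v (Sv : S v) : f v = phi (exist _ v Sv).
  by rewrite /f; case: pselect => // Sv'; rewrite (Prop_irrelevance Sv' Sv).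
have f_lin : lin_form_on S f.
  move=> k u v Su Sv; rewrite (fE _ (S_sub.2 k u v Su Sv)) (fE _ Su) (fE _ Sv).
  by rewrite -phi_cont.1; congr phi; exact: eq_exist.
have f_le v : S v -> `|f v| <= c * `|v| by move=> Sv; rewrite (fE _ Sv); exact: phi_le.
have [Phi [Phi_cont Phi_f _]] := hahn_banach_normed S_sub f_lin (ltW c0) f_le.
by exists Phi; split => // -[x Sx]; rewrite Phi_f // (fE _ Sx).
Qed.

(** * The bimodule sigma wc(A) *)

Section BanachAlgebra.
Variables (K : numFieldType) (A : completeNormedModType K) (mul : A -> A -> A).
Hypothesis hba : banach_algebra mul.

Lemma ba_mull_linear c : linear (mul c).
Proof. by move=> k a b; exact: (ba_linr hba). Qed.

Lemma ba_mulr_linear c : linear (mul^~ c).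
Proof. by move=> k a b; exact: (ba_linl hba). Qed.

Lemma ba_mulBl a b c : mul (a - b) c = mul a c - mul b c.
Proof. by rewrite addrC -scaleN1r (ba_linl hba) scaleN1r addrC. Qed.

Lemma ba_mulBr a b c : mul c (a - b) = mul c a - mul c b.
Proof. by rewrite addrC -scaleN1r (ba_linr hba) scaleN1r addrC. Qed.

Lemma ba_mul0l c : mul 0 c = 0.
Proof. by rewrite -(subrr (0 : A)) ba_mulBl !subrr. Qed.

Lemma ba_mul0r c : mul c 0 = 0.
Proof. by rewrite -(subrr (0 : A)) ba_mulBr !subrr. Qed.

Lemma cont_functional_mull (f : A -> K) c : is_cont_functional f ->
  is_cont_functional (fun a => f (mul c a)).
Proof.
move=> f_cont; apply: (cont_functional_comp f_cont (ba_mull_linear c) (normr_ge0 c)).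
exact: (ba_submul hba).
Qed.

Lemma cont_functional_mulr (f : A -> K) c : is_cont_functional f ->
  is_cont_functional (fun a => f (mul a c)).
Proof.
move=> f_cont; apply: (cont_functional_comp f_cont (ba_mulr_linear c) (normr_ge0 c)).
by move=> a; rewrite mulrC; exact: (ba_submul hba).
Qed.

End BanachAlgebra.

Section SigmaWC.
Variables (R : realType) (A P : completeNormedModType R[i]).
Variables (mul : A -> A -> A) (pA : A -> P -> R[i]).
Hypothesis hdba : dual_banach_algebra mul pA.

Let hba : banach_algebra mul. Proof. by case: hdba. Qed.
Let hdp : dual_pairing pA. Proof. by case: hdba. Qed.
Let mulr_wc c : weak_continuous pA pA (mul^~ c). Proof. by case: hdba. Qed.
Let mull_wc c : weak_continuous pA pA (mul c). Proof. by case: hdba. Qed.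

Local Notation sw := (sigmawc mul pA).

Lemma sigmawcP x : sw x <-> forall f : cdual A,
  predual_form pA (fun a => sval f (mul a x)) /\ predual_form pA (fun a => sval f (mul x a)).
Proof.
split => [[xl xr] f|x_pre]; last first.
  by split; apply: predual_form_weak_continuous => f; have [] := x_pre f.
have f_lin : lin_form (sval f) := (svalP f).1.
split.
- apply: (weak_continuous_predual_form hdp (q := @weak_pairing _ A) _ xl) => k a b.
  by rewrite /weak_pairing (ba_mulr_linear hba) f_lin.
- apply: (weak_continuous_predual_form hdp (q := @weak_pairing _ A) _ xr) => k a b.
  by rewrite /weak_pairing (ba_mull_linear hba) f_lin.
Qed.

Lemma sigmawc_subspace : subspace_set sw.
Proof.
split.
  apply/sigmawcP => f; have f_lin : lin_form (sval f) := (svalP f).1.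
  by split; exists 0 => a;
    rewrite ?(ba_mul0l hba) ?(ba_mul0r hba) (lin_form0 f_lin) (lin_form0 (dual_pairing_linr hdp a)).
move=> k u v /sigmawcP u_pre /sigmawcP v_pre; apply/sigmawcP => f.
have f_lin : lin_form (sval f) := (svalP f).1.
have [[ql hql] [qr hqr]] := u_pre f; have [[pl hpl] [pr hpr]] := v_pre f.
split.
- exists (k *: ql + pl) => a.
  by rewrite (ba_mull_linear hba) f_lin hql hpl (dual_pairing_linr hdp).
- exists (k *: qr + pr) => a.
  by rewrite (ba_mulr_linear hba) f_lin hqr hpr (dual_pairing_linr hdp).
Qed.

Lemma sigmawc_mull c x : sw x -> sw (mul c x).
Proof.
move=> /sigmawcP x_pre; apply/sigmawcP => f; split.
- have [[q hq] _] := x_pre f.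
  have [q' hq'] := predual_form_comp hdp q (ba_mulr_linear hba c) (@mulr_wc c).
  by exists q' => a; rewrite (ba_assoc hba) hq hq'.
- pose fc : cdual A := exist _ _ (cont_functional_mull hba c (svalP f)).
  have [_ [q hq]] := x_pre fc.
  by exists q => a; rewrite -hq /= (ba_assoc hba).
Qed.

Lemma sigmawc_mulr c x : sw x -> sw (mul x c).
Proof.
move=> /sigmawcP x_pre; apply/sigmawcP => f; split.
- pose fc : cdual A := exist _ _ (cont_functional_mulr hba c (svalP f)).
  have [[q hq] _] := x_pre fc.
  by exists q => a; rewrite -hq /= (ba_assoc hba).
- have [_ [q hq]] := x_pre f.
  have [q' hq'] := predual_form_comp hdp q (ba_mull_linear hba c) (@mull_wc c).
  by exists q' => a; rewrite -(ba_assoc hba) hq hq'.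
Qed.

Lemma sigmawc_closed : closed sw.
Proof.
move=> x x_cl; apply/sigmawcP => f; have f_lin : lin_form (sval f) := (svalP f).1.
have [c c0 f_le] := cont_functional_bound (svalP f).
have near_x e : 0 < e -> exists2 y, sw y & c * `|x - y| <= e.
  move=> e0; have [y [sy]] := x_cl _ (nbhsx_ballx x _ (divr_gt0 e0 c0)).
  by rewrite -ball_normE /= ltr_pdivlMr // mulrC => xy; exists y => //; exact: ltW.
split; apply: predual_form_closed => // e /near_x[y /sigmawcP y_pre xy].
- have [[q hq] _] := y_pre f; exists q => a.
  rewrite -hq -(lin_formB f_lin) -(ba_mulBr hba); apply: le_trans (f_le _) _.
  apply: le_trans (ler_wpM2l (ltW c0) (ba_submul hba _ _)) _.
  by rewrite mulrCA mulrC ler_wpM2r.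
- have [_ [q hq]] := y_pre f; exists q => a.
  rewrite -hq -(lin_formB f_lin) -(ba_mulBl hba); apply: le_trans (f_le _) _.
  apply: le_trans (ler_wpM2l (ltW c0) (ba_submul hba _ _)) _.
  by rewrite mulrA ler_wpM2r.
Qed.

End SigmaWC.

Section SigmaWCModule.
Variables (R : realType) (A P : completeNormedModType R[i]).
Variables (mul : A -> A -> A) (pA : A -> P -> R[i]).
Hypothesis hdba : dual_banach_algebra mul pA.

Let hba : banach_algebra mul. Proof. by case: hdba. Qed.

Local Notation sw := (sigmawc mul pA).
Local Notation F := (closed_subspace (sigmawc_subspace hdba) (sigmawc_closed hdba)).

Definition sigmawc_lact (a : A) (x : F) : F :=
  exist _ (mul a (sval x)) (sigmawc_mull hdba a (svalP x)).
Definition sigmawc_ract (x : F) (a : A) : F :=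
  exist _ (mul (sval x) a) (sigmawc_mulr hdba a (svalP x)).

Lemma sigmawc_bimodule : banach_bimodule mul sigmawc_lact sigmawc_ract.
Proof.
split=> *; try apply: eq_exist.
- exact: (ba_linl hba).
- exact: (ba_linr hba).
- exact: (ba_linl hba).
- exact: (ba_linr hba).
- exact/esym/(ba_assoc hba).
- exact: (ba_assoc hba).
- exact/esym/(ba_assoc hba).
- exact: (ba_submul hba).
- exact: (ba_submul hba).
Qed.

Lemma sigmawc_dual_normal : dual_module_normal pA sigmawc_lact sigmawc_ract.
Proof.
move=> phi /closed_subspace_extend[Phi [Phi_cont Phi_phi]].
split; apply: predual_form_weak_continuous => x;
  have [[ql hql] [qr hqr]] := (sigmawcP hdba _).1 (svalP x) (exist _ Phi Phi_cont).
- by exists qr => a; rewrite -Phi_phi; exact: hqr.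
- by exists ql => a; rewrite -Phi_phi; exact: hql.
Qed.

Variable D : A -> A -> R[i].

Lemma sigmawc_derivation : dual_derivation mul mul mul D ->
  dual_derivation mul sigmawc_lact sigmawc_ract (fun a x => D a (sval x)).
Proof.
case=> D_cont D_lin [C D_le] D_der; split => //.
- move=> a; have sval_le (x : F) : `|sval x| <= 1 * `|x| by rewrite mul1r.
  exact: (cont_functional_comp (D_cont a) _ ler01 sval_le).
- by exists C.
- by move=> a b x; exact: D_der.
Qed.

Lemma sigmawc_derivation_weak_continuous :
  weak_continuous pA (fun (psi : A -> R[i]) (x : {x : A | sw x}) => psi (sval x)) D ->
  weak_continuous pA (fun (psi : F -> R[i]) (x : F) => psi x) (fun a x => D a (sval x)).
Proof.
move=> D_wc a0 N [n [xs [e [e0 N_xs]]]].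
apply: (D_wc a0 [set psi | N (fun x : F => psi (sval x))]).
by exists n, xs, e; split => // psi; exact: N_xs.
Qed.

End SigmaWCModule.

Theorem theorem3p5 (R : realType)
  (A P : completeNormedModType R[i]) (mul : A -> A -> A) (pA : A -> P -> R[i]) :
  dual_banach_algebra mul pA ->
  connes_amenable mul pA ->
  weakly_connes_amenable mul pA.
Proof.
move=> hdba connes D D_der D_wc.
have [phi [phi_cont D_inner]] := connes _ _ _ (sigmawc_bimodule hdba)
  (sigmawc_dual_normal (hdba := hdba)) _ (sigmawc_derivation hdba D_der)
  (sigmawc_derivation_weak_continuous (hdba := hdba) D_wc).
have [Phi [Phi_cont Phi_phi]] := closed_subspace_extend phi_cont.
exists Phi; split.
- by move=> k u v _ _; exact: Phi_cont.1.
- exact: continuous_subspaceT Phi_cont.2.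
- by move=> a x sx; rewrite (D_inner a (exist _ x sx)) -!Phi_phi.
Qed.
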